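(* There is a universal constant $c>0$ such that for all $q\in(0,1/2)$, all $\gamma\in(0,1]$ and $L=\lfloor 1/q^\gamma\rfloor$, with $B=\{\eta\in\Omega_\Lambda:\eta_L=1\}$, $$\frac{c\,q}{C_{\mathbb 10,B}}\le T_{\rm hit}(L)\le\frac{q}{C_{\mathbb 10,B}}.$$
   Context: Fix $q\in(0,1/2)$, $p=1-q$, $\Lambda=\{1,\dots,L\}$, $\Omega_\Lambda=\{0,1\}^\Lambda$, $\pi$ the product measure with $\pi(\sigma_x=1)=p$. The East process has transition rates $K(\sigma,\sigma^x)=c_x(\sigma)[p(1-\sigma_x)+q\sigma_x]$ ($\sigma^x$ = $\sigma$ with spin at $x$ flipped), $c_1\equiv1$, $c_x(\sigma)=1-\sigma_{x-1}$ for $x\ge2$. For disjoint $A,B\subset\Omega_\Lambda$, the capacity is $C_{A,B}=\sum_{a\in A}\pi(a)\mathcal R(a)\mathbb P_a(\tau_A^+>\tau_B)$, where $\mathcal R(a)=\sum_{\sigma\ne a}K(a,\sigma)$, $\tau_B$ is the hitting time of $B$ and $\tau_A^+$ the first return time to $A$ (first time in $A$ after leaving the initial state); $C_{a,B}$ denotes $C_{\{a\},B}$. $\mathbb 10$ has $\sigma_x=1$ for $x<L$, $\sigma_L=0$, and $T_{\rm hit}(L)=\mathbb E_{\mathbb 10}[\tau_{\{\eta_L=1\}}]$. *)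

From Stdlib Require Import Reals Arith List.
Import ListNotations.
Open Scope R_scope.

(* A configuration on Lambda = {1,..,L}: only values at sites 1..L matter. *)
Definition config := nat -> bool.

Definition sum_sites (L : nat) (f : nat -> R) : R :=
  fold_right Rplus 0 (map f (seq 1 L)).

Definition prod_sites (L : nat) (f : nat -> R) : R :=
  fold_right Rmult 1 (map f (seq 1 L)).

Definition flip (s : config) (x : nat) : config :=
  fun y => if Nat.eqb y x then negb (s y) else s y.

Definition constr (s : config) (x : nat) : R :=
  if Nat.eqb x 1 then 1 else if s (x - 1)%nat then 0 else 1.

Definition rate (q : R) (s : config) (x : nat) : R :=
  constr s x * (if s x then q else 1 - q).

Definition esc (q : R) (L : nat) (s : config) : R :=
  sum_sites L (fun x => rate q s x).

Definition pi_meas (q : R) (L : nat) (s : config) : R :=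
  prod_sites L (fun x => if s x then 1 - q else q).

Definition config_eqb (L : nat) (s t : config) : bool :=
  forallb (fun x => Bool.eqb (s x) (t x)) (seq 1 L).

(* Probability that the (embedded jump chain of the) process started at s
   hits B before A within n jumps (the initial state counts: 1 if s in B,
   else 0 if s in A). Increasing in n; its limit is P_s(tau_B < tau_A). *)
Fixpoint hitB_before_A (q : R) (L : nat) (inA inB : config -> bool)
    (n : nat) (s : config) : R :=
  if inB s then 1 else if inA s then 0 else
  match n with
  | O => 0
  | S m => sum_sites L (fun x =>
             rate q s x / esc q L s * hitB_before_A q L inA inB m (flip s x))
  end.

(* n-step approximation of the capacity C_{a,B}
   = pi(a) R(a) P_a(tau_a^+ > tau_B)
   = pi(a) sum_x K(a,a^x) P_{a^x}(tau_B < tau_a). *)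
Definition cap_seq (q : R) (L : nat) (a : config) (inB : config -> bool)
    (n : nat) : R :=
  pi_meas q L a * sum_sites L (fun x =>
     rate q a x * hitB_before_A q L (config_eqb L a) inB n (flip a x)).

(* Expected (continuous-time) time spent before tau_B during the first n
   jumps; increases to E_s[tau_B]. *)
Fixpoint hit_time_seq (q : R) (L : nat) (inB : config -> bool)
    (n : nat) (s : config) : R :=
  if inB s then 0 else
  match n with
  | O => 0
  | S m => / esc q L s + sum_sites L (fun x =>
             rate q s x / esc q L s * hit_time_seq q L inB m (flip s x))
  end.

Definition one_zero (L : nat) : config := fun y => Nat.ltb y L.

Definition setB (L : nat) : config -> bool := fun s => s L.

From Pilot Require Import Defs.
From Stdlib Require Import Reals Lra Lia List Arith FunctionalExtensionality Bool.
Import ListNotations.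
Open Scope R_scope.

(** Let a = 1 0 (sites 1..L-1 occupied, site L empty) and B = {eta_L = 1}.
  Write T(s) for the expected hitting time of B and h(s) for the
  probability of hitting B before the configurations agreeing with a;
  both are limits of the monotone truncated sequences of [Defs].

  - T is finite: by the restart inequality it suffices that, from any
    configuration, B is reached within L jumps with probability at least
    (q/L)^L (follow the constraint chain towards site L).
  - The limits solve Dirichlet problems for the generator:
    L T = -1 off B, T = 0 on B;  L h = 0 off B and a, h = 1 on B, h(a) = 0.
  - Reversibility of pi (Green's identity) applied to T and 1 - h gives
    C_{a,B} T(a) = sum_{s notin B} pi(s) (1 - h(s)),
    which lies between pi(a) and pi(B^c) = q.
  - Finally pi(a) = p^(L-1) q >= q/9 because L q <= 1, so c = 1/9 works. *)

Definition fsum {A} (l : list A) (f : A -> R) : R := fold_right Rplus 0 (map f l).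
Definition fprod {A} (l : list A) (f : A -> R) : R := fold_right Rmult 1 (map f l).

Lemma fsum_ext {A} (l : list A) f g :
  (forall x, In x l -> f x = g x) -> fsum l f = fsum l g.
Proof.
  induction l as [|a l IH]; intros H; [reflexivity|].
  unfold fsum in *; simpl. rewrite H, IH; auto with datatypes.
Qed.

Lemma fsum_le {A} (l : list A) f g :
  (forall x, In x l -> f x <= g x) -> fsum l f <= fsum l g.
Proof.
  induction l as [|a l IH]; intros H; unfold fsum in *; simpl; [lra|].
  apply Rplus_le_compat; auto with datatypes.
Qed.

Lemma fsum_plus {A} (l : list A) f g :
  fsum l (fun x => f x + g x) = fsum l f + fsum l g.
Proof. induction l; unfold fsum in *; simpl; [lra|]. rewrite IHl; lra. Qed.

Lemma fsum_scal {A} (l : list A) c f : fsum l (fun x => c * f x) = c * fsum l f.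
Proof. induction l; unfold fsum in *; simpl; [lra|]. rewrite IHl; lra. Qed.

Lemma fsum_opp {A} (l : list A) f : fsum l (fun x => - f x) = - fsum l f.
Proof. induction l; unfold fsum in *; simpl; [lra|]. rewrite IHl; lra. Qed.

Lemma fsum_const {A} (l : list A) c : fsum l (fun _ => c) = INR (length l) * c.
Proof.
  induction l; unfold fsum in *; cbn [length map fold_right]; [simpl; lra|].
  rewrite IHl, S_INR; lra.
Qed.

Lemma fsum_nonneg {A} (l : list A) f :
  (forall x, In x l -> 0 <= f x) -> 0 <= fsum l f.
Proof.
  intros H. rewrite <- (Rmult_0_r (INR (length l))), <- fsum_const.
  now apply fsum_le.
Qed.

Lemma fsum_ge_term {A} (l : list A) f y :
  (forall x, In x l -> 0 <= f x) -> In y l -> f y <= fsum l f.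
Proof.
  induction l as [|a l IH]; intros H Hy; [contradiction|].
  unfold fsum in *; simpl.
  assert (0 <= fold_right Rplus 0 (map f l)) by (apply (fsum_nonneg l f); auto with datatypes).
  assert (0 <= f a) by auto with datatypes.
  destruct Hy as [<-|Hy]; [lra|].
  assert (f y <= fold_right Rplus 0 (map f l)) by auto with datatypes. lra.
Qed.

Lemma fsum_flat_map2 {A B} (l : list A) (g1 g2 : A -> B) f :
  fsum (flat_map (fun c => [g1 c; g2 c]) l) f = fsum l (fun c => f (g1 c) + f (g2 c)).
Proof. induction l; unfold fsum in *; simpl; [lra|]. rewrite IHl; lra. Qed.

Lemma fsum_swap {A B} (l1 : list A) (l2 : list B) (f : A -> B -> R) :
  fsum l1 (fun a => fsum l2 (fun b => f a b)) = fsum l2 (fun b => fsum l1 (fun a => f a b)).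
Proof.
  induction l1 as [|a l1 IH].
  - unfold fsum at 1; simpl. rewrite <- (Rmult_0_r (INR (length l2))), <- fsum_const.
    apply fsum_ext; reflexivity.
  - change (fsum l2 (fun b => f a b) + fsum l1 (fun a => fsum l2 (fun b => f a b))
      = fsum l2 (fun b => f a b + fsum l1 (fun a => f a b))).
    now rewrite IH, fsum_plus.
Qed.

Lemma fsum_cv {A} (l : list A) (u : nat -> A -> R) (v : A -> R) :
  (forall x, In x l -> Un_cv (fun n => u n x) (v x)) ->
  Un_cv (fun n => fsum l (u n)) (fsum l v).
Proof.
  induction l as [|a l IH]; intros H; unfold fsum in *; simpl.
  - intros e He. exists 0%nat. intros. unfold R_dist. rewrite Rminus_diag, Rabs_R0; lra.
  - apply CV_plus; auto with datatypes.
Qed.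

Lemma fprod_ext {A} (l : list A) f g :
  (forall x, In x l -> f x = g x) -> fprod l f = fprod l g.
Proof.
  induction l as [|a l IH]; intros H; [reflexivity|].
  unfold fprod in *; simpl. rewrite H, IH; auto with datatypes.
Qed.

Lemma fprod_app {A} (l1 l2 : list A) f : fprod (l1 ++ l2) f = fprod l1 f * fprod l2 f.
Proof. induction l1; unfold fprod in *; simpl; [lra|]. rewrite IHl1; lra. Qed.

Lemma fprod_const {A} (l : list A) c : fprod l (fun _ => c) = c ^ length l.
Proof. induction l; unfold fprod in *; simpl; [reflexivity|]. now rewrite IHl. Qed.

Lemma fprod_update {A} (l : list A) f g x :
  NoDup l -> In x l -> (forall y, y <> x -> f y = g y) ->
  fprod l g * f x = fprod l f * g x.
Proof.
  induction l as [|a l IH]; intros Hnd Hx Hfg; [contradiction|].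
  inversion Hnd as [|? ? Ha Hnd']; subst.
  change (g a * fprod l g * f x = f a * fprod l f * g x).
  destruct Hx as [<-|Hx].
  - rewrite (fprod_ext l g f); [ring|].
    intros y Hy. symmetry; apply Hfg. intros ->. contradiction.
  - rewrite <- (Hfg a) by (intros ->; contradiction).
    rewrite !Rmult_assoc, IH; auto.
Qed.

(** * Enumerating the configurations of Lambda_k

  [all_configs k] lists the configurations of {1..k} exactly once, each in
  its canonical form: site 0 set to 1 and sites beyond k set to 0. *)
Definition base_config : config := fun y => Nat.eqb y 0.
Definition extend (c : config) k b : config := fun y => if Nat.eqb y k then b else c y.

Fixpoint all_configs (k : nat) : list config :=
  match k with
  | O => [base_config]
  | S j => flat_map (fun c => [extend c (S j) false; extend c (S j) true]) (all_configs j)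
  end.

Definition canonical k (s : config) : Prop :=
  s 0%nat = true /\ forall y, (k < y)%nat -> s y = false.

Lemma all_configs_canonical k s : In s (all_configs k) -> canonical k s.
Proof.
  revert s; induction k as [|k IH]; simpl; intros s Hs.
  - destruct Hs as [<-|[]]. split; [reflexivity|]. intros y Hy. apply Nat.eqb_neq; lia.
  - apply in_flat_map in Hs as [c [Hc Hs]]. destruct (IH c Hc) as [H0 H1].
    simpl in Hs. destruct Hs as [<-|[<-|[]]]; unfold extend; split; auto;
      intros y Hy; destruct (Nat.eqb_spec y (S k)); try lia; apply H1; lia.
Qed.

Lemma config_eqb_refl k s : config_eqb k s s = true.
Proof. apply forallb_forall. intros; apply eqb_reflx. Qed.

Lemma canonical_eqb k s t :
  canonical k s -> canonical k t -> config_eqb k s t = true -> s = t.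
Proof.
  intros [Hs0 Hs1] [Ht0 Ht1] Heq. unfold config_eqb in Heq. rewrite forallb_forall in Heq.
  apply functional_extensionality; intros y.
  destruct (Nat.eq_dec y 0) as [->|Hy0]; [congruence|].
  destruct (le_lt_dec y k) as [Hy|Hy].
  - apply eqb_prop, Heq, in_seq; lia.
  - rewrite Hs1, Ht1; auto.
Qed.

Lemma one_zero_canonical L : (1 <= L)%nat -> canonical L (one_zero L).
Proof.
  intros HL. split; [apply Nat.ltb_lt; lia|]. intros y Hy. apply Nat.ltb_ge; lia.
Qed.

Lemma config_eqb_extend k c c' b :
  config_eqb (S k) c (extend c' (S k) b) = config_eqb k c c' && Bool.eqb (c (S k)) b.
Proof.
  unfold config_eqb. rewrite seq_S, forallb_app. simpl. rewrite andb_true_r.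
  unfold extend at 2. rewrite Nat.eqb_refl. f_equal.
  apply eq_iff_eq_true. rewrite !forallb_forall.
  assert (E : forall y, In y (seq 1 k) -> extend c' (S k) b y = c' y).
  { intros y Hy. apply in_seq in Hy. unfold extend.
    destruct (Nat.eqb_spec y (S k)); [lia|reflexivity]. }
  split; intros H y Hy; [rewrite <- E | rewrite E]; auto.
Qed.

(** Summing [v] over the configurations agreeing with [c] on 1..k gives
    [v]: exactly one enumerated configuration agrees with [c]. *)
Lemma fsum_configs_indicator k c v :
  fsum (all_configs k) (fun s => if config_eqb k c s then v else 0) = v.
Proof.
  induction k as [|k IH]; [unfold fsum; simpl; lra|].
  simpl all_configs. rewrite fsum_flat_map2, <- IH.
  apply fsum_ext; intros c' _. rewrite !config_eqb_extend.
  destruct (config_eqb k c c'), (c (S k)); simpl; lra.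
Qed.

Lemma flip_flip s x : flip (flip s x) x = s.
Proof.
  apply functional_extensionality; intros y. unfold flip.
  destruct (Nat.eqb y x); [apply negb_involutive|reflexivity].
Qed.

Lemma flip_at s x : flip s x x = negb (s x).
Proof. unfold flip. now rewrite Nat.eqb_refl. Qed.

Lemma flip_off s x y : y <> x -> flip s x y = s y.
Proof. intros H. unfold flip. apply Nat.eqb_neq in H. now rewrite H. Qed.

(** Flipping a site of Lambda_k permutes the configurations. *)
Lemma fsum_configs_flip k x F : (1 <= x <= k)%nat ->
  fsum (all_configs k) (fun s => F (flip s x)) = fsum (all_configs k) F.
Proof.
  revert F; induction k as [|k IH]; intros F Hx; [lia|]. simpl all_configs.
  rewrite !fsum_flat_map2.
  destruct (Nat.eq_dec x (S k)) as [->|Hne].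
  - apply fsum_ext; intros c _.
    assert (E : forall b, flip (extend c (S k) b) (S k) = extend c (S k) (negb b)).
    { intros b; apply functional_extensionality; intros y; unfold flip, extend.
      destruct (Nat.eqb y (S k)); reflexivity. }
    rewrite !E; simpl; lra.
  - assert (E : forall c b, flip (extend c (S k) b) x = extend (flip c x) (S k) b).
    { intros c b; apply functional_extensionality; intros y; unfold flip, extend.
      destruct (Nat.eqb_spec y x), (Nat.eqb_spec y (S k)); auto; lia. }
    set (G := fun c => F (extend c (S k) false) + F (extend c (S k) true)).
    transitivity (fsum (all_configs k) (fun c => G (flip c x))).
    + apply fsum_ext; intros; unfold G; now rewrite !E.
    + apply IH; lia.
Qed.

(** * The product measure and reversibility *)
Definition site_weight q (b : bool) : R := if b then 1 - q else q.

Lemma pi_meas_fprod q L s : pi_meas q L s = fprod (seq 1 L) (fun x => site_weight q (s x)).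
Proof. reflexivity. Qed.

Lemma pi_meas_pos q L s : 0 < q < 1 -> 0 < pi_meas q L s.
Proof.
  intros Hq. rewrite pi_meas_fprod. unfold fprod.
  induction (seq 1 L); simpl; [lra|].
  apply Rmult_lt_0_compat; auto. unfold site_weight; destruct (s a); lra.
Qed.

Lemma pi_meas_S q k s : pi_meas q (S k) s = pi_meas q k s * site_weight q (s (S k)).
Proof. rewrite !pi_meas_fprod, seq_S, fprod_app. unfold fprod at 2; simpl. ring. Qed.

Lemma pi_meas_extend q k c b : pi_meas q k (extend c (S k) b) = pi_meas q k c.
Proof.
  rewrite !pi_meas_fprod. apply fprod_ext. intros y Hy. apply in_seq in Hy.
  unfold extend. destruct (Nat.eqb_spec y (S k)); [lia|reflexivity].
Qed.

Lemma pi_meas_total q k : fsum (all_configs k) (pi_meas q k) = 1.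
Proof.
  induction k as [|k IH]; [unfold fsum, pi_meas, prod_sites; simpl; ring|].
  simpl all_configs. rewrite fsum_flat_map2, <- IH. apply fsum_ext; intros c _.
  rewrite !pi_meas_S, !pi_meas_extend. unfold extend, site_weight. rewrite Nat.eqb_refl. ring.
Qed.

Lemma pi_meas_not_setB q L : (1 <= L)%nat ->
  fsum (all_configs L) (fun s => if setB L s then 0 else pi_meas q L s) = q.
Proof.
  intros HL. destruct L as [|k]; [lia|]. unfold setB. simpl all_configs.
  rewrite fsum_flat_map2.
  transitivity (fsum (all_configs k) (fun s => q * pi_meas q k s)).
  - apply fsum_ext; intros c _. rewrite !pi_meas_S, !pi_meas_extend.
    unfold extend, site_weight. rewrite Nat.eqb_refl. ring.
  - rewrite fsum_scal, pi_meas_total. ring.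
Qed.

Lemma pi_meas_one_zero q m : pi_meas q (S m) (one_zero (S m)) = (1 - q) ^ m * q.
Proof.
  rewrite pi_meas_S.
  replace (site_weight q (one_zero (S m) (S m))) with q
    by (unfold site_weight, one_zero; now rewrite Nat.ltb_irrefl).
  f_equal.
  rewrite pi_meas_fprod.
  transitivity (fprod (seq 1 m) (fun _ => 1 - q)); [|now rewrite fprod_const, length_seq].
  apply fprod_ext. intros y Hy. apply in_seq in Hy. unfold site_weight, one_zero.
  replace (Nat.ltb y (S m)) with true; [reflexivity|]. symmetry; apply Nat.ltb_lt; lia.
Qed.

Lemma detailed_balance q L s x : (1 <= x <= L)%nat ->
  pi_meas q L (flip s x) * rate q (flip s x) x = pi_meas q L s * rate q s x.
Proof.
  intros Hx.
  assert (Hc : constr (flip s x) x = constr s x).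
  { unfold constr. destruct (Nat.eqb x 1); [reflexivity|]. rewrite flip_off by lia. reflexivity. }
  assert (Hpi : pi_meas q L (flip s x) * site_weight q (s x)
              = pi_meas q L s * site_weight q (negb (s x))).
  { rewrite !pi_meas_fprod, <- flip_at.
    apply (fprod_update _ (fun y => site_weight q (s y)) (fun y => site_weight q (flip s x y))).
    - apply seq_NoDup.
    - apply in_seq; lia.
    - intros y Hy. now rewrite flip_off. }
  unfold rate. rewrite Hc, flip_at.
  replace (if negb (s x) then q else 1 - q) with (site_weight q (s x))
    by (destruct (s x); reflexivity).
  replace (if s x then q else 1 - q) with (site_weight q (negb (s x)))
    by (destruct (s x); reflexivity).
  transitivity (constr s x * (pi_meas q L (flip s x) * site_weight q (s x))); [ring|].
  rewrite Hpi; ring.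
Qed.

Definition generator q L (f : config -> R) (s : config) : R :=
  fsum (seq 1 L) (fun x => rate q s x * (f (flip s x) - f s)).

(** Green's identity: by detailed balance the generator is self-adjoint in
    L^2(pi), i.e. sum pi g (L f) = sum pi f (L g). *)
Lemma green q L f g :
  fsum (all_configs L) (fun s => pi_meas q L s * g s * generator q L f s) =
  fsum (all_configs L) (fun s => pi_meas q L s * f s * generator q L g s).
Proof.
  set (w := fun s x => pi_meas q L s * rate q s x).
  assert (Split : forall f g s, pi_meas q L s * g s * generator q L f s =
     fsum (seq 1 L) (fun x => w s x * g s * f (flip s x))
     + - fsum (seq 1 L) (fun x => w s x * (g s * f s))).
  { intros f0 g0 s. unfold generator.
    rewrite <- fsum_scal, <- fsum_opp, <- fsum_plus. apply fsum_ext; intros; unfold w; ring. }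
  (* the jump term is symmetric: swap the sums and substitute s -> s^x *)
  assert (Jump : forall f g,
      fsum (all_configs L) (fun s => fsum (seq 1 L) (fun x => w s x * g s * f (flip s x))) =
      fsum (all_configs L) (fun s => fsum (seq 1 L) (fun x => w s x * f s * g (flip s x)))).
  { intros f0 g0. rewrite !(fsum_swap (all_configs L) (seq 1 L)).
    apply fsum_ext; intros x Hx. apply in_seq in Hx.
    rewrite <- (fsum_configs_flip L x (fun s => w s x * f0 s * g0 (flip s x))) by lia.
    apply fsum_ext; intros s _. rewrite flip_flip. unfold w.
    rewrite detailed_balance by lia. ring. }
  assert (Diag : forall f g,
      fsum (all_configs L) (fun s => fsum (seq 1 L) (fun x => w s x * (g s * f s))) =
      fsum (all_configs L) (fun s => fsum (seq 1 L) (fun x => w s x * (f s * g s)))).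
  { intros f0 g0. apply fsum_ext; intros; apply fsum_ext; intros; ring. }
  rewrite (fsum_ext _ _ _ (fun s _ => Split f g s)), (fsum_ext _ _ _ (fun s _ => Split g f s)).
  rewrite !fsum_plus, !fsum_opp, Jump, Diag. reflexivity.
Qed.

(** Let [T] solve the Dirichlet problem L T = -1 off B,
    T = 0 on B, and [h] the equilibrium potential: L h = 0 off B and off the
    configurations agreeing with [a], h = 1 on B and h(a) = 0.  Green's
    identity for [T] and [1 - h] gives
      sum_{s notin B} pi(s) (1 - h(s)) = pi(a) (sum_x K(a, a^x) h(a^x)) T(a). *)
Lemma capacity_identity q L (a : config) (inB : config -> bool) (T h : config -> R) :
  canonical L a -> inB a = false ->
  (forall s, inB s = true -> T s = 0) ->
  (forall s, inB s = false -> generator q L T s = -1) ->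
  (forall s, inB s = true -> h s = 1) -> h a = 0 ->
  (forall s, inB s = false -> config_eqb L a s = false -> generator q L h s = 0) ->
  fsum (all_configs L) (fun s => if inB s then 0 else pi_meas q L s * (1 - h s)) =
  pi_meas q L a * fsum (seq 1 L) (fun x => rate q a x * h (flip a x)) * T a.
Proof.
  intros Ha HaB HTB HTL HhB Hha HhL.
  set (K := fsum (seq 1 L) (fun x => rate q a x * h (flip a x))).
  assert (Hgen_a : generator q L h a = K).
  { unfold generator. rewrite Hha. apply fsum_ext; intros; ring. }
  assert (Hcompl : forall s, generator q L (fun s => 1 - h s) s = - generator q L h s).
  { intros s. unfold generator. rewrite <- fsum_opp. apply fsum_ext; intros; ring. }
  assert (Left : fsum (all_configs L) (fun s => pi_meas q L s * (1 - h s) * generator q L T s)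
               = - fsum (all_configs L) (fun s => if inB s then 0 else pi_meas q L s * (1 - h s))).
  { rewrite <- fsum_opp. apply fsum_ext; intros s _.
    destruct (inB s) eqn:E; [rewrite HhB by exact E | rewrite HTL by exact E]; ring. }
  assert (Right : fsum (all_configs L) (fun s => pi_meas q L s * T s * generator q L (fun s => 1 - h s) s)
                = - (pi_meas q L a * K * T a)).
  { rewrite <- (fsum_configs_indicator L a (pi_meas q L a * K * T a)), <- fsum_opp.
    apply fsum_ext; intros s Hs. rewrite Hcompl.
    destruct (config_eqb L a s) eqn:EA.
    - assert (s = a) as -> by (symmetry; apply (canonical_eqb L);
        auto using all_configs_canonical).
      rewrite Hgen_a. ring.
    - destruct (inB s) eqn:EB; [rewrite HTB | rewrite HhL]; auto; ring. }
  pose proof (green q L T (fun s => 1 - h s)) as G. cbv beta in G.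
  rewrite Left, Right in G. lra.
Qed.

Lemma cv_const c : Un_cv (fun _ => c) c.
Proof. intros e He. exists 0%nat. intros. unfold R_dist. rewrite Rminus_diag, Rabs_R0; lra. Qed.

Lemma cv_S u l : Un_cv u l -> Un_cv (fun n => u (S n)) l.
Proof. intros H e He. destruct (H e He) as [N HN]. exists N. intros n Hn. apply HN. lia. Qed.

Lemma cv_bounds u l lo hi : Un_cv u l -> (forall n, lo <= u n <= hi) -> lo <= l <= hi.
Proof.
  intros H Hb. split.
  - apply (Rle_cv_lim (Un := fun _ => lo) (Vn := u)); auto using cv_const. apply Hb.
  - apply (Rle_cv_lim (Un := u) (Vn := fun _ => hi)); auto using cv_const. apply Hb.
Qed.

Lemma monotone_limits {X} (u : X -> nat -> R) b :
  (forall s n, u s n <= u s (S n)) -> (forall s n, u s n <= b) ->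
  exists F : X -> R, forall s, Un_cv (u s) (F s).
Proof.
  intros Hm Hb.
  assert (G : forall s, {l | Un_cv (u s) l}).
  { intros s. apply growing_cv; [intros n; apply Hm|]. exists b. intros x [i ->]. apply Hb. }
  exists (fun s => proj1_sig (G s)). intros s. apply proj2_sig.
Qed.

(** * The embedded jump chain *)

Definition jump_prob q L s x : R := rate q s x / esc q L s.

Section JumpChain.

Variables (q : R) (L : nat).
Hypothesis Hq : 0 < q < 1/2.
Hypothesis HL : (1 <= L)%nat.

Lemma constr_01 s x : constr s x = 0 \/ constr s x = 1.
Proof. unfold constr. destruct (Nat.eqb x 1), (s (x - 1)%nat); auto. Qed.

Lemma rate_bounds s x : 0 <= rate q s x <= 1.
Proof. unfold rate. destruct (constr_01 s x) as [-> | ->], (s x); lra. Qed.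

(** Site 1 is always unconstrained, so the escape rate is at least q. *)
Lemma esc_ge_q s : q <= esc q L s.
Proof.
  apply Rle_trans with (rate q s 1).
  - unfold rate, constr; simpl. destruct (s 1%nat); lra.
  - apply fsum_ge_term; [intros; apply rate_bounds|]. apply in_seq; lia.
Qed.

Lemma esc_le_L s : esc q L s <= INR L.
Proof.
  apply Rle_trans with (fsum (seq 1 L) (fun _ => 1)).
  - apply fsum_le; intros; apply rate_bounds.
  - rewrite fsum_const, length_seq; lra.
Qed.

Lemma jump_prob_nonneg s x : 0 <= jump_prob q L s x.
Proof.
  pose proof (esc_ge_q s). pose proof (rate_bounds s x). unfold jump_prob, Rdiv.
  apply Rmult_le_pos; [lra|]. left; apply Rinv_0_lt_compat; lra.
Qed.

Lemma jump_prob_total s : fsum (seq 1 L) (jump_prob q L s) = 1.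
Proof.
  pose proof (esc_ge_q s). unfold jump_prob.
  transitivity (/ esc q L s * fsum (seq 1 L) (rate q s)).
  - rewrite <- fsum_scal. apply fsum_ext; intros; unfold Rdiv; ring.
  - change (fsum (seq 1 L) (rate q s)) with (esc q L s). field; lra.
Qed.

Lemma jump_prob_ge s x : q <= rate q s x -> q / INR L <= jump_prob q L s x.
Proof.
  intros Hr. pose proof (esc_ge_q s). pose proof (esc_le_L s). unfold jump_prob.
  apply Rle_trans with (q / esc q L s); unfold Rdiv.
  - apply Rmult_le_compat_l; [lra|]. apply Rinv_le_contravar; lra.
  - apply Rmult_le_compat_r; [left; apply Rinv_0_lt_compat|]; lra.
Qed.

Lemma jump_avg_le s f c : (forall x, In x (seq 1 L) -> f x <= c) ->
  fsum (seq 1 L) (fun x => jump_prob q L s x * f x) <= c.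
Proof.
  intros H. rewrite <- (Rmult_1_l c), <- (jump_prob_total s), Rmult_comm, <- fsum_scal.
  apply fsum_le; intros. rewrite (Rmult_comm c).
  apply Rmult_le_compat_l; auto using jump_prob_nonneg.
Qed.

Lemma jump_avg_ge s f c : (forall x, In x (seq 1 L) -> c <= f x) ->
  c <= fsum (seq 1 L) (fun x => jump_prob q L s x * f x).
Proof.
  intros H. rewrite <- (Rmult_1_l c), <- (jump_prob_total s), Rmult_comm, <- fsum_scal.
  apply fsum_le; intros. rewrite (Rmult_comm c).
  apply Rmult_le_compat_l; auto using jump_prob_nonneg.
Qed.

Lemma jump_avg_mono s f g : (forall x, In x (seq 1 L) -> f x <= g x) ->
  fsum (seq 1 L) (fun x => jump_prob q L s x * f x) <=
  fsum (seq 1 L) (fun x => jump_prob q L s x * g x).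
Proof. intros H. apply fsum_le; intros. apply Rmult_le_compat_l; auto using jump_prob_nonneg. Qed.

Lemma generator_jump f s : generator q L f s =
  esc q L s * (fsum (seq 1 L) (fun x => jump_prob q L s x * f (flip s x)) - f s).
Proof.
  pose proof (esc_ge_q s).
  assert (E : fsum (seq 1 L) (fun x => jump_prob q L s x * f (flip s x)) =
              / esc q L s * fsum (seq 1 L) (fun x => rate q s x * f (flip s x))).
  { rewrite <- fsum_scal. apply fsum_ext; intros; unfold jump_prob, Rdiv; ring. }
  rewrite E, Rmult_minus_distr_l, <- Rmult_assoc, Rinv_r, Rmult_1_l by lra.
  change (esc q L s) with (fsum (seq 1 L) (rate q s)).
  unfold generator. rewrite Rmult_comm, <- fsum_scal. unfold Rminus. rewrite <- fsum_opp, <- fsum_plus.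
  apply fsum_ext; intros; ring.
Qed.

Lemma hit_prob_S inA inB m s : hitB_before_A q L inA inB (S m) s =
  if inB s then 1 else if inA s then 0 else
  fsum (seq 1 L) (fun x => jump_prob q L s x * hitB_before_A q L inA inB m (flip s x)).
Proof. reflexivity. Qed.

Lemma hit_prob_0 inA inB s : hitB_before_A q L inA inB 0 s = if inB s then 1 else 0.
Proof. simpl. destruct (inB s), (inA s); reflexivity. Qed.

Lemma hit_prob_inB inA inB n s : inB s = true -> hitB_before_A q L inA inB n s = 1.
Proof. intros H; destruct n; simpl; now rewrite H. Qed.

Lemma hit_prob_bounds inA inB n s : 0 <= hitB_before_A q L inA inB n s <= 1.
Proof.
  revert s; induction n as [|n IH]; intros s.
  - rewrite hit_prob_0. destruct (inB s); lra.
  - rewrite hit_prob_S. destruct (inB s); [lra|]. destruct (inA s); [lra|].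
    split; [apply jump_avg_ge | apply jump_avg_le]; intros; apply IH.
Qed.

Lemma hit_prob_mono inA inB n s :
  hitB_before_A q L inA inB n s <= hitB_before_A q L inA inB (S n) s.
Proof.
  revert s; induction n as [|n IH]; intros s.
  - rewrite hit_prob_S, hit_prob_0. destruct (inB s); [lra|]. destruct (inA s); [lra|].
    apply jump_avg_ge; intros; apply hit_prob_bounds.
  - rewrite (hit_prob_S _ _ (S n)), hit_prob_S. destruct (inB s); [lra|].
    destruct (inA s); [lra|]. apply jump_avg_mono; auto.
Qed.

Lemma hit_prob_ge_jump inA inB k s x : inB s = false -> inA s = false -> (1 <= x <= L)%nat ->
  jump_prob q L s x * hitB_before_A q L inA inB k (flip s x) <=
  hitB_before_A q L inA inB (S k) s.
Proof.
  intros HB HA Hx. rewrite hit_prob_S, HB, HA.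
  apply (fsum_ge_term _ (fun x => jump_prob q L s x * hitB_before_A q L inA inB k (flip s x))).
  - intros; apply Rmult_le_pos; [apply jump_prob_nonneg|apply hit_prob_bounds].
  - apply in_seq; lia.
Qed.

Lemma hit_time_S inB m s : hit_time_seq q L inB (S m) s =
  if inB s then 0 else
  / esc q L s + fsum (seq 1 L) (fun x => jump_prob q L s x * hit_time_seq q L inB m (flip s x)).
Proof. reflexivity. Qed.

Lemma hit_time_0 inB s : hit_time_seq q L inB 0 s = 0.
Proof. simpl. destruct (inB s); reflexivity. Qed.

Lemma hit_time_inB inB n s : inB s = true -> hit_time_seq q L inB n s = 0.
Proof. intros H; destruct n; simpl; now rewrite H. Qed.

(** Each jump takes mean time at most 1/q. *)
Lemma hit_time_bounds inB n s : 0 <= hit_time_seq q L inB n s <= INR n / q.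
Proof.
  revert s; induction n as [|n IH]; intros s.
  - rewrite hit_time_0. simpl. unfold Rdiv; lra.
  - rewrite hit_time_S, S_INR.
    assert (0 <= INR n / q) by (unfold Rdiv; apply Rmult_le_pos; [apply pos_INR|left; apply Rinv_0_lt_compat; lra]).
    assert (0 < / q) by (apply Rinv_0_lt_compat; lra).
    destruct (inB s); [unfold Rdiv; lra|].
    pose proof (esc_ge_q s).
    assert (0 < / esc q L s <= / q) by (split; [apply Rinv_0_lt_compat|apply Rinv_le_contravar]; lra).
    assert (0 <= fsum (seq 1 L) (fun x => jump_prob q L s x * hit_time_seq q L inB n (flip s x)))
      by (apply jump_avg_ge; intros; apply IH).
    assert (fsum (seq 1 L) (fun x => jump_prob q L s x * hit_time_seq q L inB n (flip s x)) <= INR n / q)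
      by (apply jump_avg_le; intros; apply IH).
    unfold Rdiv in *; lra.
Qed.

Lemma hit_time_mono inB n s : hit_time_seq q L inB n s <= hit_time_seq q L inB (S n) s.
Proof.
  revert s; induction n as [|n IH]; intros s.
  - rewrite hit_time_0. apply (hit_time_bounds inB 1 s).
  - rewrite (hit_time_S _ (S n)), hit_time_S. destruct (inB s); [lra|].
    apply Rplus_le_compat_l, jump_avg_mono; auto.
Qed.

Lemma hit_time_mono_le inB n m s : (n <= m)%nat ->
  hit_time_seq q L inB n s <= hit_time_seq q L inB m s.
Proof.
  induction 1; [lra|]. eapply Rle_trans; [eassumption|apply hit_time_mono].
Qed.

(** Restart inequality: if [M] bounds the [m]-step hitting time from every
    state, then running [k] more steps first costs at most [M] times the
    probability of not having hit [B] within those [k] steps. *)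
Lemma hit_time_restart inB M m : (forall s, hit_time_seq q L inB m s <= M) ->
  forall k s, hit_time_seq q L inB (k + m) s <=
    hit_time_seq q L inB k s + (1 - hitB_before_A q L (fun _ => false) inB k s) * M.
Proof.
  intros HM k. induction k as [|k IH]; intros s.
  - rewrite hit_time_0, hit_prob_0. simpl plus.
    destruct (inB s) eqn:E; [rewrite hit_time_inB by auto|specialize (HM s)]; lra.
  - simpl plus. rewrite !hit_time_S, hit_prob_S. destruct (inB s); [lra|]. cbv beta iota.
    set (T := fun x => hit_time_seq q L inB k (flip s x)).
    set (H := fun x => hitB_before_A q L (fun _ => false) inB k (flip s x)).
    assert (Step : fsum (seq 1 L) (fun x => jump_prob q L s x * hit_time_seq q L inB (k + m) (flip s x))
                <= fsum (seq 1 L) (fun x => jump_prob q L s x * (T x + (1 - H x) * M)))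
      by (apply jump_avg_mono; intros; apply IH).
    assert (E : fsum (seq 1 L) (fun x => jump_prob q L s x * (T x + (1 - H x) * M)) =
      fsum (seq 1 L) (fun x => jump_prob q L s x * T x) + M * fsum (seq 1 L) (jump_prob q L s)
      + - M * fsum (seq 1 L) (fun x => jump_prob q L s x * H x)).
    { rewrite <- !fsum_scal, <- !fsum_plus. apply fsum_ext; intros; ring. }
    rewrite jump_prob_total in E. unfold T, H in *. cbv beta in *. lra.
Qed.

Lemma jump_scale_bounds : 0 < q / INR L <= 1.
Proof.
  assert (HLr : 1 <= INR L) by (apply (le_INR 1); auto).
  split; unfold Rdiv.
  - apply Rmult_lt_0_compat; [lra|]. apply Rinv_0_lt_compat; lra.
  - apply Rle_trans with (q * 1); [|lra]. apply Rmult_le_compat_l; [lra|].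
    rewrite <- Rinv_1. apply Rinv_le_contravar; lra.
Qed.

(** From a configuration with eta_L = 0 whose site L - m is unconstrained, the
    East dynamics reaches B within m + 1 jumps with probability at least
    (q/L)^(m+1): move the unconstrained site rightwards from L - m to L,
    emptying occupied sites on the way, and finally fill site L. *)
Lemma reach_B_lower m s : (m < L)%nat -> s L = false -> constr s (L - m) = 1 ->
  (q / INR L) ^ S m <= hitB_before_A q L (fun _ => false) (setB L) (S m) s.
Proof.
  pose proof jump_scale_bounds as He. set (eps := q / INR L) in *.
  revert s; induction m as [|m IH]; intros s Hm HsL Hc.
  - rewrite pow_1. eapply Rle_trans; [|apply hit_prob_ge_jump with (x := L); auto].
    rewrite hit_prob_0. unfold setB. rewrite flip_at, HsL, Rmult_1_r.
    apply jump_prob_ge. unfold rate. rewrite Nat.sub_0_r in Hc. rewrite Hc, HsL. lra.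
  - set (x := (L - S m)%nat).
    assert (Hfree : forall t, t x = false -> constr t (L - m) = 1).
    { intros t Ht. unfold constr. destruct (Nat.eqb_spec (L - m) 1); [lia|].
      replace (L - m - 1)%nat with x by (unfold x; lia). now rewrite Ht. }
    change (eps ^ S (S m)) with (eps * eps ^ S m).
    destruct (s x) eqn:Esx.
    + (* empty site x = L - m - 1 first *)
      assert (IH' : eps ^ S m <= hitB_before_A q L (fun _ => false) (setB L) (S m) (flip s x)).
      { apply IH; [lia| |].
        - rewrite flip_off by (unfold x; lia). exact HsL.
        - apply Hfree. now rewrite flip_at, Esx. }
      eapply Rle_trans; [|apply (hit_prob_ge_jump _ _ (S m) s x); [auto|auto|unfold x; lia]].
      apply Rmult_le_compat; [lra|apply pow_le; lra| |exact IH'].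
      apply jump_prob_ge. unfold rate. change (constr s x = 1) in Hc. rewrite Hc, Esx. lra.
    + (* site x is empty, so site L - m is already unconstrained *)
      assert (eps ^ S m <= hitB_before_A q L (fun _ => false) (setB L) (S m) s)
        by (apply IH; auto; lia).
      pose proof (pow_le eps (S m)).
      pose proof (hit_prob_mono (fun _ => false) (setB L) (S m) s).
      assert (eps * eps ^ S m <= eps ^ S m) by (rewrite <- (Rmult_1_l (eps ^ S m)) at 2;
        apply Rmult_le_compat_r; lra).
      lra.
Qed.

Lemma reach_B_lower_all s :
  (q / INR L) ^ L <= hitB_before_A q L (fun _ => false) (setB L) L s.
Proof.
  destruct (s L) eqn:Es.
  - rewrite hit_prob_inB by exact Es.
    rewrite <- (pow1 L). apply pow_incr. pose proof jump_scale_bounds. lra.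
  - pose proof (reach_B_lower (L - 1) s) as H.
    replace (S (L - 1)) with L in H by lia. apply H; [lia|exact Es|].
    replace (L - (L - 1))%nat with 1%nat by lia. reflexivity.
Qed.

Lemma hit_time_bounded : exists b, forall n s, hit_time_seq q L (setB L) n s <= b.
Proof.
  pose proof jump_scale_bounds as He. set (eps := q / INR L) in *.
  assert (HeL : 0 < eps ^ L) by (apply pow_lt; lra).
  set (b := (INR L / q) / eps ^ L).
  assert (Hb : INR L / q + (1 - eps ^ L) * b = b) by (unfold b; field; lra).
  assert (Hb0 : 0 <= b).
  { unfold b, Rdiv. apply Rmult_le_pos; [apply Rmult_le_pos; [apply pos_INR|]|];
      left; apply Rinv_0_lt_compat; lra. }
  assert (HN : forall N s, hit_time_seq q L (setB L) (N * L) s <= b).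
  { induction N as [|N IH]; intros s; [rewrite Nat.mul_0_l, hit_time_0; lra|].
    change (S N * L)%nat with (L + N * L)%nat.
    eapply Rle_trans; [apply hit_time_restart, IH|].
    assert (hit_time_seq q L (setB L) L s <= INR L / q) by apply hit_time_bounds.
    assert ((1 - hitB_before_A q L (fun _ => false) (setB L) L s) * b <= (1 - eps ^ L) * b)
      by (apply Rmult_le_compat_r; [lra|]; pose proof (reach_B_lower_all s) as Hr; fold eps in Hr; lra).
    lra. }
  exists b. intros n s. eapply Rle_trans; [|apply (HN n s)].
  apply hit_time_mono_le. nia.
Qed.

Lemma hit_time_limit : exists T : config -> R,
  forall s, Un_cv (fun n => hit_time_seq q L (setB L) n s) (T s).
Proof.
  destruct hit_time_bounded as [b Hb].
  apply (monotone_limits (fun s n => hit_time_seq q L (setB L) n s) b);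
    intros; [apply hit_time_mono | apply Hb].
Qed.

Lemma hit_prob_limit inA inB : exists h : config -> R,
  forall s, Un_cv (fun n => hitB_before_A q L inA inB n s) (h s).
Proof.
  apply (monotone_limits (fun s n => hitB_before_A q L inA inB n s) 1);
    intros; [apply hit_prob_mono | apply hit_prob_bounds].
Qed.

(** The limiting hitting time satisfies the first-step equation, hence
    solves the Dirichlet problem L T = -1 off B, T = 0 on B. *)
Lemma hit_time_limit_dirichlet inB T :
  (forall s, Un_cv (fun n => hit_time_seq q L inB n s) (T s)) ->
  (forall s, inB s = true -> T s = 0) /\
  (forall s, inB s = false -> generator q L T s = -1).
Proof.
  intros HT.
  assert (E : forall s, T s = if inB s then 0 else
            / esc q L s + fsum (seq 1 L) (fun x => jump_prob q L s x * T (flip s x))).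
  { intros s. apply (UL_sequence (fun n => hit_time_seq q L inB (S n) s)); [apply (cv_S (fun n => hit_time_seq q L inB n s)), HT|].
    rewrite (functional_extensionality _ _ (fun n => hit_time_S inB n s)).
    destruct (inB s); [apply cv_const|].
    apply CV_plus; [apply cv_const|]. apply fsum_cv; intros x _.
    apply CV_mult; [apply cv_const|apply HT]. }
  split; intros s HB; [now rewrite E, HB|].
  rewrite generator_jump, (E s), HB. cbv iota. pose proof (esc_ge_q s). field. lra.
Qed.

(** The limiting hitting probability of B before A satisfies the first-step
    equation, hence is harmonic off A and B, with boundary values 0 on A
    and 1 on B. *)
Lemma hit_prob_limit_dirichlet inA inB h :
  (forall s, Un_cv (fun n => hitB_before_A q L inA inB n s) (h s)) ->
  (forall s, 0 <= h s <= 1) /\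
  (forall s, inB s = true -> h s = 1) /\
  (forall s, inB s = false -> inA s = true -> h s = 0) /\
  (forall s, inB s = false -> inA s = false -> generator q L h s = 0).
Proof.
  intros Hh.
  assert (E : forall s, h s = if inB s then 1 else if inA s then 0 else
            fsum (seq 1 L) (fun x => jump_prob q L s x * h (flip s x))).
  { intros s. apply (UL_sequence (fun n => hitB_before_A q L inA inB (S n) s)); [apply (cv_S (fun n => hitB_before_A q L inA inB n s)), Hh|].
    rewrite (functional_extensionality _ _ (fun n => hit_prob_S inA inB n s)).
    destruct (inB s); [apply cv_const|]. destruct (inA s); [apply cv_const|].
    apply fsum_cv; intros x _. apply CV_mult; [apply cv_const|apply Hh]. }
  split; [intros s; apply (cv_bounds _ _ 0 1 (Hh s)); intros; apply hit_prob_bounds|].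
  split; [intros s HB; now rewrite E, HB|].
  split; [intros s HB HA; now rewrite E, HB, HA|].
  intros s HB HA. rewrite generator_jump, (E s), HB, HA. cbv iota. ring.
Qed.

(** With T and h the limits above and a = 1 0, the capacity identity gives
  C T(a) = sum_{s notin B} pi(s) (1 - h(s)), which lies between
  pi(a) (the term s = a, where h(a) = 0) and pi(B^c) = q. *)
Lemma hitting_time_times_capacity : exists T C : R,
  Un_cv (fun n => hit_time_seq q L (setB L) n (one_zero L)) T /\
  Un_cv (fun n => cap_seq q L (one_zero L) (setB L) n) C /\
  0 <= C /\ pi_meas q L (one_zero L) <= C * T <= q.
Proof.
  set (a := one_zero L).
  destruct hit_time_limit as [T HT].
  destruct (hit_prob_limit (config_eqb L a) (setB L)) as [h Hh].
  destruct (hit_time_limit_dirichlet (setB L) T HT) as [HTB HTL].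
  destruct (hit_prob_limit_dirichlet (config_eqb L a) (setB L) h Hh) as (Hh01 & HhB & HhA & HhL).
  assert (HaB : setB L a = false) by apply Nat.ltb_irrefl.
  assert (Hha : h a = 0) by (apply HhA; [exact HaB|apply config_eqb_refl]).
  set (K := fsum (seq 1 L) (fun x => rate q a x * h (flip a x))).
  set (Sum := fsum (all_configs L) (fun s => if setB L s then 0 else pi_meas q L s * (1 - h s))).
  assert (Id : Sum = pi_meas q L a * K * T a).
  { apply capacity_identity; auto using one_zero_canonical. }
  assert (HS_le : Sum <= q).
  { rewrite <- (pi_meas_not_setB q L HL). apply fsum_le; intros s _.
    destruct (setB L s); [lra|]. pose proof (pi_meas_pos q L s ltac:(lra)). pose proof (Hh01 s). nra. }
  assert (HS_ge : pi_meas q L a <= Sum).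
  { rewrite <- (fsum_configs_indicator L a (pi_meas q L a)). apply fsum_le; intros s Hs.
    destruct (config_eqb L a s) eqn:EA.
    - assert (s = a) as -> by (symmetry; apply (canonical_eqb L);
        auto using all_configs_canonical, one_zero_canonical).
      rewrite HaB, Hha. lra.
    - destruct (setB L s); [lra|]. pose proof (pi_meas_pos q L s ltac:(lra)). pose proof (Hh01 s). nra. }
  exists (T a), (pi_meas q L a * K). split; [apply HT|]. split.
  - unfold cap_seq. apply CV_mult; [apply cv_const|]. apply fsum_cv; intros x _.
    apply CV_mult; [apply cv_const|apply Hh].
  - split; [|lra]. apply Rmult_le_pos; [left; apply pi_meas_pos; lra|].
    apply fsum_nonneg; intros. apply Rmult_le_pos; [apply rate_bounds|apply Hh01].
Qed.

End JumpChain.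

(** * Numerical estimates *)

Lemma length_bounds q gamma L : 0 < q < 1/2 -> 0 < gamma <= 1 ->
  INR L <= / Rpower q gamma < INR L + 1 -> (1 <= L)%nat /\ INR L * q <= 1.
Proof.
  intros Hq Hg HL.
  assert (Hln : ln q < 0) by (rewrite <- ln_1; apply ln_increasing; lra).
  set (P := Rpower q gamma) in *.
  assert (HP : 0 < P < 1).
  { unfold P, Rpower. split; [apply exp_pos|]. rewrite <- exp_0. apply exp_increasing. nra. }
  assert (HPq : q <= P).
  { unfold P, Rpower. rewrite <- (exp_ln q) at 1 by lra.
    destruct (Rle_lt_or_eq_dec (ln q) (gamma * ln q)) as [H|H]; [nra| |].
    - left; apply exp_increasing; exact H.
    - right; f_equal; exact H. }
  split.
  - assert (1 < / P) by (rewrite <- Rinv_1; apply Rinv_lt_contravar; lra).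
    destruct L; [simpl in HL; lra|lia].
  - assert (/ P <= / q) by (apply Rinv_le_contravar; lra).
    apply Rmult_le_reg_r with (/ q); [apply Rinv_0_lt_compat; lra|].
    rewrite Rmult_assoc, Rinv_r, Rmult_1_l, Rmult_1_r by lra. lra.
Qed.

Lemma exp_pow_nat x m : exp x ^ m = exp (INR m * x).
Proof.
  induction m as [|m IH]; simpl; [now rewrite Rmult_0_l, exp_0|].
  rewrite IH, <- exp_plus. f_equal. destruct m; simpl; ring.
Qed.

(** If m q <= 1 then (1 - q)^m >= 1/9: indeed (1 - q)(1 + 2q) >= 1 and
    (1 + 2q)^m <= e^(2 m q) <= e^2 <= 9. *)
Lemma pow_one_minus_q_lower q m : 0 < q < 1/2 -> INR m * q <= 1 -> 1/9 <= (1 - q) ^ m.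
Proof.
  intros Hq Hm.
  assert (A1 : 1 <= (1 - q) ^ m * (1 + 2 * q) ^ m).
  { rewrite <- Rpow_mult_distr. apply Rle_trans with (1 ^ m); [rewrite pow1; lra|].
    apply pow_incr. nra. }
  assert (A2 : (1 + 2 * q) ^ m <= exp (INR m * (2 * q))).
  { rewrite <- exp_pow_nat. apply pow_incr. split; [lra|]. left; apply exp_ineq1; lra. }
  assert (A3 : exp (INR m * (2 * q)) <= exp 2).
  { destruct (Rle_lt_or_eq_dec (INR m * (2 * q)) 2) as [Hl|He]; [nra| |].
    - left; apply exp_increasing, Hl.
    - rewrite He; lra. }
  assert (A4 : exp 2 <= 9).
  { replace 2 with (1 + 1) by ring. rewrite exp_plus. pose proof exp_le_3. pose proof (exp_pos 1). nra. }
  assert (0 < (1 + 2 * q) ^ m) by (apply pow_lt; lra).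
  assert (0 <= (1 - q) ^ m) by (apply pow_le; lra).
  nra.
Qed.

Lemma pi_one_zero_lower q L : 0 < q < 1/2 -> (1 <= L)%nat -> INR L * q <= 1 ->
  q / 9 <= pi_meas q L (one_zero L).
Proof.
  intros Hq HL HLq. destruct L as [|m]; [lia|].
  rewrite pi_meas_one_zero. rewrite S_INR in HLq.
  assert (1/9 <= (1 - q) ^ m) by (apply pow_one_minus_q_lower; nra). nra.
Qed.

Theorem mainTheorem16 :
  exists c : R, 0 < c /\
  forall (q gamma : R), 0 < q < 1/2 -> 0 < gamma <= 1 ->
  forall L : nat, INR L <= / Rpower q gamma < INR L + 1 ->
  exists T C : R,
    Un_cv (fun n => hit_time_seq q L (setB L) n (one_zero L)) T /\
    Un_cv (fun n => cap_seq q L (one_zero L) (setB L) n) C /\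
    c * q / C <= T <= q / C.
Proof.
  exists (1/9). split; [lra|]. intros q gamma Hq Hg L HL.
  destruct (length_bounds q gamma L Hq Hg HL) as [HL1 HLq].
  pose proof (pi_one_zero_lower q L Hq HL1 HLq) as Hpi.
  destruct (hitting_time_times_capacity q L Hq HL1) as (T & C & HT & HC & HC0 & HCT).
  exists T, C. split; [exact HT|]. split; [exact HC|].
  (* C T >= q/9 > 0 forces C > 0, so we may divide by C *)
  assert (HCpos : 0 < C) by (destruct HC0 as [|<-]; [assumption|lra]).
  unfold Rdiv. rewrite (Rmult_comm q), Rmult_assoc.
  split; apply Rmult_le_reg_l with C; auto; field_simplify; lra.
Qed.
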